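(* Let $d\ge1$ and $L\ge2$ be integers, $\Phi\in\mathbb{R}^{d\times d}$, and $W_1,\dots,W_L\in\mathbb{R}^{d\times d}$, with $\mathcal{R}=\tfrac12\|W_{L:1}-\Phi\|_F^2$. Suppose $\|W_l\|_2\le\alpha$ for $l=1,\dots,L-1$ and $\|W_L\|_2\le\beta$, where $\alpha,\beta\ge0$ and, for some $\phi>0$, $1\le\alpha^{2(L-1)}<L\phi^2$ and $\alpha^{2(L-1)}\beta^2<2\phi^2$. Then $$\|\nabla_l\mathcal{R}\|_F^2\le4\phi^2\mathcal{R}\quad(l=1,\dots,L-1),\qquad\|\nabla_L\mathcal{R}\|_F^2\le2L\phi^2\mathcal{R}.$$
   Context: For $l_2\ge l_1$ write $W_{l_2:l_1}=W_{l_2}\cdots W_{l_1}$, empty products being the identity $I$. $\nabla_l\mathcal{R}=W_{L:l+1}^\intercal(W_{L:1}-\Phi)W_{l-1:1}^\intercal$ is the gradient of $\mathcal{R}(W_1,\dots,W_L)=\tfrac12\|W_L\cdots W_1-\Phi\|_F^2$ with respect to $W_l$. $\|\cdot\|_2$ is the spectral norm and $\|\cdot\|_F$ the Frobenius norm. *)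

From HB Require Import structures.
From mathcomp Require Import all_boot all_order all_algebra.
From mathcomp Require Import all_classical all_reals.
Set Implicit Arguments. Unset Strict Implicit. Unset Printing Implicit Defensive.
Import Order.TTheory GRing.Theory Num.Theory.
Local Open Scope ring_scope.
Local Open Scope classical_set_scope.

Section Defs.
Variables (R : realType) (d : nat).

Definition frob (A : 'M[R]_d) : R := Num.sqrt (\sum_i \sum_j A i j ^+ 2).

Definition vnorm2 (v : 'cV[R]_d) : R := Num.sqrt (\sum_i v i 0 ^+ 2).

Definition spec_norm (A : 'M[R]_d) : R :=
  sup [set vnorm2 (A *m v) | v in [set v : 'cV[R]_d | vnorm2 v = 1]].

Fixpoint prodk (W : nat -> 'M[R]_d) (k lo : nat) : 'M[R]_d :=
  match k with
  | 0 => 1%:M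
  | k'.+1 => W (lo + k')%N *m prodk W k' lo
  end.

(* W_{l2:l1} = W_l2 * ... * W_l1, identity if l2 < l1 *)
Definition Wprod (W : nat -> 'M[R]_d) (l2 l1 : nat) : 'M[R]_d :=
  prodk W (l2.+1 - l1)%N l1.

Definition risk (W : nat -> 'M[R]_d) (L : nat) (Phi : 'M[R]_d) : R :=
  2^-1 * frob (Wprod W L 1 - Phi) ^+ 2.

Definition gradR (W : nat -> 'M[R]_d) (L : nat) (Phi : 'M[R]_d) (l : nat)
  : 'M[R]_d :=
  (Wprod W L l.+1)^T *m (Wprod W L 1 - Phi) *m (Wprod W l.-1 1)^T.

End Defs.

From HB Require Import structures.
From mathcomp Require Import all_boot all_order all_algebra.
From mathcomp Require Import all_classical all_reals.
From mathcomp Require Import ring lra zify.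
Import Order.TTheory GRing.Theory Num.Theory.
Local Open Scope ring_scope.

Set Implicit Arguments. Unset Strict Implicit. Unset Printing Implicit Defensive.

(* The gradient is [X^T E Y^T] with [E = W_{L:1} - Phi], [X = W_{L:l+1}] and
   [Y = W_{l-1:1}], so [||grad_l||_F^2 <= ||X||_2^2 ||Y||_2^2 ||E||_F^2] and
   [||E||_F^2 = 2 R].  The operator norms of the partial products are bounded
   by submultiplicativity: [||X||_2^2 ||Y||_2^2 <= beta^2 alpha^(2(L-2))] for
   [l < L], which is below [2 phi^2] because [alpha >= 1], and
   [||Y||_2^2 <= alpha^(2(L-1)) < L phi^2] for [l = L]. *)

Lemma lagrange_identity (R : comPzRingType) n (a b : 'I_n -> R) :
  \sum_i \sum_j (a i * b j - a j * b i) ^+ 2 =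
  2 * ((\sum_i a i ^+ 2) * (\sum_j b j ^+ 2) - (\sum_i a i * b i) ^+ 2).
Proof.
have expand i j : (a i * b j - a j * b i) ^+ 2 =
    a i ^+ 2 * b j ^+ 2 + a j ^+ 2 * b i ^+ 2 - 2 * ((a i * b i) * (a j * b j)).
  by ring.
under eq_bigr do under eq_bigr do rewrite expand.
under eq_bigr do rewrite sumrB big_split /=.
rewrite sumrB big_split /= [X in _ + X - _]exchange_big /=.
under [X in _ - X]eq_bigr do rewrite -mulr_sumr.
rewrite -mulr_sumr expr2 !big_distrlr /=.
ring.
Qed.

Lemma cauchy_schwarz (R : realDomainType) n (a b : 'I_n -> R) :
  (\sum_i a i * b i) ^+ 2 <= (\sum_i a i ^+ 2) * (\sum_i b i ^+ 2).
Proof.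
have : 0 <= \sum_i \sum_j (a i * b j - a j * b i) ^+ 2.
  by apply: sumr_ge0 => i _; apply: sumr_ge0 => j _; exact: sqr_ge0.
by rewrite lagrange_identity pmulr_rge0 // subr_ge0.
Qed.

Section SquaredNorms.
Variable R : realDomainType.

Definition sqnorm n (v : 'cV[R]_n) : R := \sum_i v i 0 ^+ 2.

Definition sqfrob m n (M : 'M[R]_(m, n)) : R := \sum_i \sum_j M i j ^+ 2.

(* Working with squared norms keeps square roots out of everything except the
   link with [spec_norm]. *)
Definition sqopnorm_le m n (A : 'M[R]_(m, n)) (c : R) : Prop :=
  forall v, sqnorm (A *m v) <= c * sqnorm v.

Lemma sqnorm_ge0 n (v : 'cV[R]_n) : 0 <= sqnorm v.
Proof. by apply: sumr_ge0 => i _; exact: sqr_ge0. Qed.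

Lemma sqfrob_ge0 m n (M : 'M[R]_(m, n)) : 0 <= sqfrob M.
Proof. by apply: sumr_ge0 => i _; apply: sumr_ge0 => j _; exact: sqr_ge0. Qed.

Lemma sqnorm_dot n (v : 'cV[R]_n) : sqnorm v = (v^T *m v) 0 0.
Proof. by rewrite mxE; apply: eq_bigr => i _; rewrite mxE expr2. Qed.

Lemma sqfrob_tr m n (M : 'M[R]_(m, n)) : sqfrob M^T = sqfrob M.
Proof.
rewrite /sqfrob exchange_big.
by apply: eq_bigr => i _; apply: eq_bigr => j _; rewrite mxE.
Qed.

Lemma sqfrob_col m n (M : 'M[R]_(m, n)) : sqfrob M = \sum_j sqnorm (col j M).
Proof.
rewrite /sqfrob exchange_big.
by apply: eq_bigr => j _; apply: eq_bigr => i _; rewrite mxE.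
Qed.

Lemma sqopnorm_le_frob m n (A : 'M[R]_(m, n)) : sqopnorm_le A (sqfrob A).
Proof.
move=> v; rewrite /sqnorm /sqfrob mulr_suml; apply: ler_sum => i _.
rewrite mxE; exact: cauchy_schwarz.
Qed.

Lemma sqopnorm_le1 n : sqopnorm_le (1%:M : 'M[R]_n) 1.
Proof. by move=> v; rewrite mul1mx mul1r. Qed.

Lemma sqopnorm_le_mul m n p (A : 'M[R]_(m, n)) (B : 'M[R]_(n, p)) a b :
  0 <= a -> sqopnorm_le A a -> sqopnorm_le B b -> sqopnorm_le (A *m B) (a * b).
Proof.
move=> a_ge0 hA hB v; rewrite -mulmxA -mulrA.
by apply: le_trans (hA _) _; exact: ler_wpM2l.
Qed.

Lemma sqopnorm_le_tr m n (A : 'M[R]_(m, n)) c :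
  0 <= c -> sqopnorm_le A c -> sqopnorm_le A^T c.
Proof.
(* [|A^T v|^4 = <v, A A^T v>^2 <= |v|^2 |A A^T v|^2 <= c |v|^2 |A^T v|^2]. *)
move=> c_ge0 hA v; set u := A^T *m v.
have u_dot : sqnorm u = \sum_j v j 0 * (A *m u) j 0.
  rewrite sqnorm_dot {1}/u trmx_mul trmxK -mulmxA mxE.
  by apply: eq_bigr => j _; rewrite mxE.
have : sqnorm u ^+ 2 <= sqnorm v * (c * sqnorm u).
  rewrite {1}u_dot; apply: le_trans (cauchy_schwarz _ _) _.
  exact/ler_wpM2l/hA/sqnorm_ge0.
have [->|u_neq0] := eqVneq (sqnorm u) 0; first by rewrite mulr_ge0 ?sqnorm_ge0.
have u_gt0 : 0 < sqnorm u by rewrite lt_def u_neq0 sqnorm_ge0.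
by rewrite expr2 mulrCA mulrA ler_pM2r.
Qed.

Lemma sqfrob_mull m n p (A : 'M[R]_(m, n)) (M : 'M[R]_(n, p)) c :
  sqopnorm_le A c -> sqfrob (A *m M) <= c * sqfrob M.
Proof.
move=> hA; rewrite !sqfrob_col mulr_sumr; apply: ler_sum => j _.
by rewrite colE -mulmxA -colE.
Qed.

Lemma sqfrob_mul_tr m n p (M : 'M[R]_(m, n)) (B : 'M[R]_(p, n)) c :
  sqopnorm_le B c -> sqfrob (M *m B^T) <= c * sqfrob M.
Proof.
by move=> hB; rewrite -sqfrob_tr trmx_mul trmxK -(sqfrob_tr M); exact: sqfrob_mull.
Qed.

End SquaredNorms.

Section SpectralNorm.
Variables (R : realType) (d : nat).
Implicit Types (A M : 'M[R]_d) (v : 'cV[R]_d).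

Lemma vnorm2_sq v : vnorm2 v ^+ 2 = sqnorm v.
Proof. by rewrite sqr_sqrtr // sqnorm_ge0. Qed.

Lemma frob_sq M : frob M ^+ 2 = sqfrob M.
Proof. by rewrite sqr_sqrtr // sqfrob_ge0. Qed.

Lemma vnorm2Z (k : R) v : vnorm2 (k *: v) = `|k| * vnorm2 v.
Proof.
rewrite /vnorm2 -sqrtr_sqr -sqrtrM ?sqr_ge0 // mulr_sumr.
by congr Num.sqrt; apply: eq_bigr => i _; rewrite mxE exprMn.
Qed.

Lemma vnorm2_mul_le A v : vnorm2 (A *m v) <= spec_norm A * vnorm2 v.
Proof.
have A_bounded : has_ubound
    [set vnorm2 (A *m u) | u in [set u : 'cV[R]_d | vnorm2 u = 1]]%classic.
  exists (frob A) => _ [u /= u1 <-].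
  rewrite ler_sqrt ?sqfrob_ge0 //.
  by have := sqopnorm_le_frob A u; rewrite -[sqnorm u]vnorm2_sq u1 expr1n mulr1.
have [v0|v_neq0] := eqVneq (vnorm2 v) 0.
  have sqnorm_v0 : sqnorm v = 0 by rewrite -vnorm2_sq v0 expr0n.
  have := sqopnorm_le_frob A v; rewrite sqnorm_v0 mulr0 => Av0.
  by rewrite v0 mulr0 /vnorm2 ler0_sqrtr.
have v_gt0 : 0 < vnorm2 v by rewrite lt_def v_neq0 sqrtr_ge0.
have v_unit : vnorm2 ((vnorm2 v)^-1 *: v) = 1.
  by rewrite vnorm2Z gtr0_norm ?invr_gt0 // mulVf.
have := ub_le_sup A_bounded (ex_intro2 _ _ _ v_unit erefl).
by rewrite -scalemxAr vnorm2Z gtr0_norm ?invr_gt0 // mulrC ler_pdivrMr.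
Qed.

Lemma sqopnorm_le_spec A a : 0 <= a -> spec_norm A <= a -> sqopnorm_le A (a ^+ 2).
Proof.
move=> a_ge0 hA v; rewrite -!vnorm2_sq -exprMn.
rewrite ler_pXn2r ?nnegrE ?mulr_ge0 ?sqrtr_ge0 //.
apply: le_trans (vnorm2_mul_le A v) _.
by apply: ler_wpM2r => //; exact: sqrtr_ge0.
Qed.

End SpectralNorm.

Section LayerProducts.
Variables (R : realType) (d : nat) (W : nat -> 'M[R]_d).

Lemma Wprod_empty l2 l1 : (l2 < l1)%N -> Wprod W l2 l1 = 1%:M.
Proof. by move=> lt_l21; rewrite /Wprod (eqP lt_l21). Qed.

Lemma Wprod_recl l2 l1 : (0 < l2)%N -> (l1 <= l2)%N ->
  Wprod W l2 l1 = W l2 *m Wprod W l2.-1 l1.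
Proof.
by move=> l2_gt0 le_l12; rewrite /Wprod prednK // subSn //= subnKC.
Qed.

Lemma sqopnorm_le_prodk k lo a : 0 <= a ->
  (forall i, (i < k)%N -> sqopnorm_le (W (lo + i)) a) ->
  sqopnorm_le (prodk W k lo) (a ^+ k).
Proof.
move=> a_ge0; elim: k => [|k IHk] hW /=; first by rewrite expr0; exact: sqopnorm_le1.
rewrite exprS; apply: sqopnorm_le_mul => //; first exact: hW.
by apply: IHk => i /ltnW; exact: hW.
Qed.

Lemma sqopnorm_le_Wprod l2 l1 a : 0 <= a ->
  (forall i, (l1 <= i <= l2)%N -> sqopnorm_le (W i) a) ->
  sqopnorm_le (Wprod W l2 l1) (a ^+ (l2.+1 - l1)).
Proof. by move=> a_ge0 hW; apply: sqopnorm_le_prodk => // i ?; apply: hW; lia. Qed.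

End LayerProducts.

Section Gradient.
Variables (R : realType) (d L : nat) (Phi : 'M[R]_d) (W : nat -> 'M[R]_d).

Lemma mul2_risk : 2 * risk W L Phi = sqfrob (Wprod W L 1 - Phi).
Proof. by rewrite /risk frob_sq mulrA mulfV ?mul1r ?pnatr_eq0. Qed.

Lemma risk_ge0 : 0 <= risk W L Phi.
Proof. by rewrite -(pmulr_rge0 _ (ltr0Sn R 1)) mul2_risk sqfrob_ge0. Qed.

Lemma sqfrob_gradR_le l cX cY : 0 <= cX ->
  sqopnorm_le (Wprod W L l.+1) cX -> sqopnorm_le (Wprod W l.-1 1) cY ->
  frob (gradR W L Phi l) ^+ 2 <= cX * cY * (2 * risk W L Phi).
Proof.
move=> cX_ge0 hX hY; rewrite frob_sq mul2_risk /gradR -mulmxA -mulrA.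
apply: le_trans (sqfrob_mull _ (sqopnorm_le_tr cX_ge0 hX)) _.
exact/ler_wpM2l/sqfrob_mul_tr.
Qed.

End Gradient.

Theorem lemma8 (R : realType) (d L : nat) (Phi : 'M[R]_d) (W : nat -> 'M[R]_d)
  (alpha beta phi : R) :
  (1 <= d)%N -> (2 <= L)%N ->
  0 <= alpha -> 0 <= beta -> 0 < phi ->
  (forall l, (1 <= l <= L.-1)%N -> spec_norm (W l) <= alpha) ->
  spec_norm (W L) <= beta ->
  1 <= alpha ^+ (2 * L.-1) -> alpha ^+ (2 * L.-1) < L%:R * phi ^+ 2 ->
  alpha ^+ (2 * L.-1) * beta ^+ 2 < 2 * phi ^+ 2 ->
  (forall l, (1 <= l <= L.-1)%N ->
     frob (gradR W L Phi l) ^+ 2 <= 4 * phi ^+ 2 * risk W L Phi) /\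
  frob (gradR W L Phi L) ^+ 2 <= 2 * L%:R * phi ^+ 2 * risk W L Phi.
Proof.
move=> _ L_ge2 alpha_ge0 beta_ge0 _ hW hWL alpha_ge1 alpha_lt beta_lt.
rewrite exprM in alpha_ge1 alpha_lt beta_lt.
set a2 := alpha ^+ 2 in alpha_ge1 alpha_lt beta_lt *.
have a2_ge0 : 0 <= a2 := sqr_ge0 alpha.
have a2_ge1 : 1 <= a2 by rewrite -(@expr_ge1 _ L.-1) //; lia.
have hWa i : (1 <= i <= L.-1)%N -> sqopnorm_le (W i) a2.
  by move=> /hW; exact: sqopnorm_le_spec.
have prefix l : (1 <= l <= L)%N -> sqopnorm_le (Wprod W l.-1 1) (a2 ^+ l.-1).
  move=> ?; have := sqopnorm_le_Wprod (W := W) (l2 := l.-1) (l1 := 1) a2_ge0.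
  by rewrite subn1 /=; apply=> i ?; apply: hWa; lia.
have suffix l : (l < L)%N ->
    sqopnorm_le (Wprod W L l.+1) (beta ^+ 2 * a2 ^+ (L.-1 - l)).
  move=> lt_lL; rewrite Wprod_recl //; last by lia.
  apply: sqopnorm_le_mul; [exact: sqr_ge0 | exact: sqopnorm_le_spec |].
  by apply: sqopnorm_le_Wprod => // i ?; apply: hWa; lia.
have r_ge0 := risk_ge0 L Phi W.
split.
- move=> l /andP[l_ge1 l_lt].
  apply: le_trans (sqfrob_gradR_le Phi _ (suffix l _) (prefix l _)) _; [|lia|lia|].
    by rewrite mulr_ge0 ?sqr_ge0 ?exprn_ge0.
  have gain_le : beta ^+ 2 * a2 ^+ (L.-1 - l) * a2 ^+ l.-1 <= 2 * phi ^+ 2.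
    rewrite -mulrA -exprD; apply: le_trans (ltW beta_lt).
    by rewrite mulrC ler_wpM2r ?sqr_ge0 // ler_weXn2l //; lia.
  by nra.
- have hX : sqopnorm_le (Wprod W L L.+1) 1.
    by rewrite Wprod_empty //; exact: sqopnorm_le1.
  apply: le_trans (sqfrob_gradR_le Phi _ hX (prefix L _)) _ => //; first by lia.
  by rewrite mul1r; nra.
Qed.
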